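(* For every orthomodular lattice $X$ there is a bijection $\mathrm{char}:\mathrm{KSub}(X)\to\mathbf{OMLatGal}(2,X)$, sending the kernel $a:\downarrow a\to X$ to the morphism $\bar a:2\to X$ with $\bar a_*(0)=1$, $\bar a_*(1)=a^\perp$, $\bar a^*(x)=1$ if $x\le a^\perp$ and $0$ otherwise. It is natural: for every morphism $f:X\to Y$ of $\mathbf{OMLatGal}$, $\mathrm{char}\circ\exists_f=(f\circ-)\circ\mathrm{char}$, i.e. $\mathrm{char}(\exists_f(m))=f\circ\mathrm{char}(m)$ for all $m\in\mathrm{KSub}(X)$.
   Context: An orthomodular lattice is a bounded lattice with an order-reversing involution $x\mapsto x^\perp$ such that $x\wedge x^\perp=0$, $x\vee x^\perp=1$, and $x\le y$ implies $y=x\vee(x^\perp\wedge y)$. $2=\{0,1\}$ is the two-element Boolean algebra. The category $\mathbf{OMLatGal}$ has orthomodular lattices as objects; a morphism $f:X\to Y$ is a pair $(f_*,f^* )$ of order-reversing functions $f_*:X\to Y$, $f^*:Y\to X$ such that $y\le f_*(x)$ iff $x\le f^*(y)$. Identity: both components $x\mapsto x^\perp$. Composition: $(g\circ f)_*=g_*\circ(-)^\perp\circ f_*$, $(g\circ f)^*=f^*\circ(-)^\perp\circ g^*$. Dagger: $(f_*,f^* )^\dagger=(f^*,f_* )$. It is a dagger kernel category (zero object the one-element lattice); for $a\in X$, $\downarrow a=\{u\le a\}$ with complement $u^{\perp_a}=a\wedge u^\perp$, and the downset morphism $a:\downarrow a\to X$ ($a_*(u)=u^\perp$, $a^*(x)=a\wedge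 x^\perp$) is a dagger kernel; every kernel into $X$ is isomorphic to exactly one such. $\mathrm{KSub}(X)$ denotes the poset of dagger-mono kernels into $X$ modulo isomorphism. In a dagger kernel category $\mathrm{coker}(g)=\ker(g^\dagger)^\dagger$ and $\exists_f(m)=\ker(\mathrm{coker}(f\circ m))$. *)

From Stdlib Require Import ClassicalEpsilon.

Set Implicit Arguments.

Record OMLstr := {
  car :> Type;
  le : car -> car -> Prop;
  meet : car -> car -> car;
  join : car -> car -> car;
  bot : car;
  top : car;
  orth : car -> car }.

Arguments le {o} _ _.
Arguments meet {o} _ _.
Arguments join {o} _ _.
Arguments bot {o}.
Arguments top {o}.
Arguments orth {o} _.

Record is_OML (X : OMLstr) : Prop := {
  le_refl : forall x : X, le x x;
  le_trans : forall x y z : X, le x y -> le y z -> le x z;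
  le_antisym : forall x y : X, le x y -> le y x -> x = y;
  meet_l : forall x y : X, le (meet x y) x;
  meet_r : forall x y : X, le (meet x y) y;
  meet_glb : forall x y z : X, le z x -> le z y -> le z (meet x y);
  join_l : forall x y : X, le x (join x y);
  join_r : forall x y : X, le y (join x y);
  join_lub : forall x y z : X, le x z -> le y z -> le (join x y) z;
  bot_le : forall x : X, le bot x;
  le_top : forall x : X, le x top;
  orth_anti : forall x y : X, le x y -> le (orth y) (orth x);
  orth_invol : forall x : X, orth (orth x) = x;
  meet_orth : forall x : X, meet x (orth x) = bot;
  join_orth : forall x : X, join x (orth x) = top;
  orthomod : forall x y : X, le x y -> y = join x (meet (orth x) y) }.

(* Morphisms of OMLatGal: pairs of maps; [is_mor] is the antitone Galois condition. *)
Record Hom (X Y : OMLstr) := mkHom { fs : X -> Y ; fu : Y -> X }.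
Arguments mkHom {X Y} _ _.
Arguments fs {X Y} _ _.
Arguments fu {X Y} _ _.

Definition is_mor {X Y : OMLstr} (f : Hom X Y) : Prop :=
  (forall x x' : X, le x x' -> le (fs f x') (fs f x)) /\
  (forall y y' : Y, le y y' -> le (fu f y') (fu f y)) /\
  (forall (x : X) (y : Y), le y (fs f x) <-> le x (fu f y)).

Definition heq {X Y : OMLstr} (f g : Hom X Y) : Prop :=
  (forall x, fs f x = fs g x) /\ (forall y, fu f y = fu g y).

Definition idm (X : OMLstr) : Hom X X := mkHom (fun x => orth x) (fun x => orth x).

Definition comp {X Y Z : OMLstr} (g : Hom Y Z) (f : Hom X Y) : Hom X Z :=
  mkHom (fun x => fs g (orth (fs f x))) (fun z => fu f (orth (fu g z))).

Definition dag {X Y : OMLstr} (f : Hom X Y) : Hom Y X := mkHom (fu f) (fs f).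

Definition zero_obj : OMLstr :=
  {| car := unit; le := fun _ _ => True; meet := fun _ _ => tt;
     join := fun _ _ => tt; bot := tt; top := tt; orth := fun _ => tt |}.

Definition to_zero (X : OMLstr) : Hom X zero_obj :=
  mkHom (fun _ => (tt : zero_obj)) (fun _ => (top : X)).
Definition from_zero (Z : OMLstr) : Hom zero_obj Z :=
  mkHom (fun _ => (top : Z)) (fun _ => (tt : zero_obj)).

Definition zero_mor (X Z : OMLstr) : Hom X Z := comp (from_zero Z) (to_zero X).

Definition is_kernel {K X Z : OMLstr} (k : Hom K X) (g : Hom X Z) : Prop :=
  heq (comp g k) (zero_mor K Z) /\
  forall (W : OMLstr) (h : Hom W X), is_OML W -> is_mor h ->
    heq (comp g h) (zero_mor W Z) ->
    exists u : Hom W K, is_mor u /\ heq (comp k u) h /\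
      forall u' : Hom W K, is_mor u' -> heq (comp k u') h -> heq u' u.

Definition is_dagger_mono {K X : OMLstr} (k : Hom K X) : Prop :=
  heq (comp (dag k) k) (idm K).

(* k represents an element of KSub(X): a dagger-mono kernel (of some morphism). *)
Definition is_dkernel {K X : OMLstr} (k : Hom K X) : Prop :=
  is_OML K /\ is_mor k /\ is_dagger_mono k /\
  exists (Z : OMLstr) (g : Hom X Z), is_OML Z /\ is_mor g /\ is_kernel k g.

(* Isomorphism of kernels into X (equality in KSub(X)). *)
Definition ksub_iso {M N X : OMLstr} (m : Hom M X) (n : Hom N X) : Prop :=
  exists (p : Hom M N) (q : Hom N M), is_mor p /\ is_mor q /\
    heq (comp q p) (idm M) /\ heq (comp p q) (idm N) /\ heq (comp n p) m.

Definition two : OMLstr :=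
  {| car := bool; le := fun b c => b = true -> c = true; meet := andb;
     join := orb; bot := false; top := true; orth := negb |}.

Section Down.
Variables (X : OMLstr) (HX : is_OML X) (a : X).

Definition down_car := { u : X | le u a }.

Definition down : OMLstr :=
  {| car := down_car;
     le := fun u v => le (proj1_sig u) (proj1_sig v);
     meet := fun u v => exist (fun u => le u a) (meet (proj1_sig u) (proj1_sig v))
               (le_trans HX _ _ _ (meet_l HX _ _) (proj2_sig u));
     join := fun u v => exist (fun u => le u a) (join (proj1_sig u) (proj1_sig v))
               (join_lub HX _ _ _ (proj2_sig u) (proj2_sig v));
     bot := exist (fun u => le u a) bot (bot_le HX a);
     top := exist (fun u => le u a) a (le_refl HX a);
     orth := fun u => exist (fun u => le u a) (meet a (orth (proj1_sig u))) (meet_l HX _ _) |}.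

Definition downmor : Hom down X :=
  mkHom (fun u : down => orth (proj1_sig u))
        (fun x => (exist (fun u => le u a) (meet a (orth x)) (meet_l HX _ _) : down)).
End Down.

Definition abar {X : OMLstr} (a : X) : Hom two X :=
  mkHom (fun b : two => if b then orth a else top)
        (fun x => (if excluded_middle_informative (le x (orth a)) then true else false : two)).

(* A dagger kernel k : K -> X is determined up to isomorphism by the single element
   kimg k := (k_*(1))^⊥ of X (for the downset kernel a : ↓a -> X this element is a),
   and char(k) is the morphism ā : 2 -> X with a = kimg k. *)
From Stdlib Require Import ClassicalEpsilon ProofIrrelevance.

Section OML.
Context {X : OMLstr} (HX : is_OML X).

Lemma meet_comm (x y : X) : meet x y = meet y x.
Proof.
  apply (le_antisym HX); apply (meet_glb HX);
    first [apply (meet_l HX) | apply (meet_r HX)].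
Qed.

Lemma orth_swap (x y : X) : le x (orth y) -> le y (orth x).
Proof. intro H; apply (orth_anti HX) in H; rewrite (orth_invol HX) in H; exact H. Qed.

Lemma orth_swap' (x y : X) : le (orth x) y -> le (orth y) x.
Proof. intro H; apply (orth_anti HX) in H; rewrite (orth_invol HX) in H; exact H. Qed.

Lemma le_bot_eq (x : X) : le x bot -> x = bot.
Proof. intro H; apply (le_antisym HX); [exact H | apply (bot_le HX)]. Qed.

Lemma top_le_eq (x : X) : le top x -> x = top.
Proof. intro H; apply (le_antisym HX); [apply (le_top HX) | exact H]. Qed.

Lemma meet_eq_l (x y : X) : le x y -> meet x y = x.
Proof.
  intro H; apply (le_antisym HX); [apply (meet_l HX) |].
  apply (meet_glb HX); [apply (le_refl HX) | exact H].
Qed.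

Lemma join_bot (x : X) : join x bot = x.
Proof.
  apply (le_antisym HX); [| apply (join_l HX)].
  apply (join_lub HX); [apply (le_refl HX) | apply (bot_le HX)].
Qed.

Lemma orth_top : orth (top : X) = bot.
Proof.
  rewrite <- (meet_orth HX top), meet_comm. symmetry. apply meet_eq_l. apply (le_top HX).
Qed.

(* The relative complement of ↓a is an involution: this is where orthomodularity
   of X makes ↓a orthomodular. *)
Lemma down_invol (a u : X) : le u a -> meet a (orth (meet a (orth u))) = u.
Proof.
  intro Hu. set (w := meet a (orth (meet a (orth u)))).
  assert (Huw : le u w).
  { apply (meet_glb HX); [exact Hu |]. apply orth_swap. apply (meet_r HX). }
  assert (Hbot : meet (orth u) w = bot).
  { apply le_bot_eq. rewrite <- (meet_orth HX (meet a (orth u))).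
    apply (meet_glb HX); [apply (meet_glb HX) |].
    - apply (le_trans HX _ w); [apply (meet_r HX) | apply (meet_l HX)].
    - apply (meet_l HX).
    - apply (le_trans HX _ w); apply (meet_r HX). }
  pose proof (orthomod HX _ _ Huw) as E.
  rewrite Hbot, join_bot in E. exact E.
Qed.
End OML.

Section Mor.
Context {X Y : OMLstr} {f : Hom X Y} (Hf : is_mor f).

Lemma fs_anti (x x' : X) : le x x' -> le (fs f x') (fs f x).
Proof. apply Hf. Qed.

Lemma fu_anti (y y' : Y) : le y y' -> le (fu f y') (fu f y).
Proof. apply Hf. Qed.

Lemma gal (x : X) (y : Y) : le y (fs f x) <-> le x (fu f y).
Proof. apply Hf. Qed.

Lemma fs_bot (HX : is_OML X) (HY : is_OML Y) : fs f bot = top.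
Proof. apply (top_le_eq HY). apply gal. apply (bot_le HX). Qed.
End Mor.

Lemma comp_mor (X Y Z : OMLstr) (HY : is_OML Y) (f : Hom X Y) (g : Hom Y Z) :
  is_mor f -> is_mor g -> is_mor (comp g f).
Proof.
  intros Hf Hg; split; [|split]; simpl.
  - intros x x' H. apply (fs_anti Hg), (orth_anti HY), (fs_anti Hf), H.
  - intros y y' H. apply (fu_anti Hf), (orth_anti HY), (fu_anti Hg), H.
  - intros x z. rewrite (gal Hg). split; intro H.
    + apply (gal Hf). apply (orth_swap' HY). exact H.
    + apply (gal Hf) in H. apply (orth_swap' HY). exact H.
Qed.

Lemma dag_mor (X Y : OMLstr) (f : Hom X Y) : is_mor f -> is_mor (dag f).
Proof.
  intros (H1 & H2 & H3); split; [|split]; simpl; auto.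
  intros x y; split; apply H3.
Qed.

Lemma idm_mor (X : OMLstr) (HX : is_OML X) : is_mor (idm X).
Proof.
  split; [|split]; simpl; try apply (orth_anti HX).
  intros x y; split; apply (orth_swap HX).
Qed.

(* A Galois morphism is determined by its lower component: the upper one is its
   adjoint.  This lets every equation of morphisms be checked on f_* only. *)
Lemma heq_of_fs (X Y : OMLstr) (HX : is_OML X) (f g : Hom X Y) :
  is_mor f -> is_mor g -> (forall x, fs f x = fs g x) -> heq f g.
Proof.
  intros Hf Hg E. split; [exact E |]. intro y.
  apply (le_antisym HX).
  - apply (gal Hg). rewrite <- E. apply (gal Hf), (le_refl HX).
  - apply (gal Hf). rewrite E. apply (gal Hg), (le_refl HX).
Qed.

Section Downset.
Context {X : OMLstr} (HX : is_OML X).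

Lemma down_eq (a : X) (u v : down HX a) : proj1_sig u = proj1_sig v -> u = v.
Proof.
  destruct u as [u Hu], v as [v Hv]; simpl; intros ->. f_equal. apply proof_irrelevance.
Qed.

Lemma down_OML (a : X) : is_OML (down HX a).
Proof.
  constructor; simpl.
  - intros; apply (le_refl HX).
  - intros x y z; apply (le_trans HX).
  - intros x y H1 H2; apply down_eq; apply (le_antisym HX); assumption.
  - intros; apply (meet_l HX).
  - intros; apply (meet_r HX).
  - intros; apply (meet_glb HX); assumption.
  - intros; apply (join_l HX).
  - intros; apply (join_r HX).
  - intros; apply (join_lub HX); assumption.
  - intros; apply (bot_le HX).
  - intros [x Hx]; exact Hx.
  - intros x y H. apply (meet_glb HX); [apply (meet_l HX) |].
    apply (le_trans HX _ (orth (proj1_sig y))); [apply (meet_r HX) | apply (orth_anti HX), H].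
  - intros [x Hx]; apply down_eq; simpl. apply (down_invol HX _ _ Hx).
  - intros [x Hx]; apply down_eq; simpl. apply (le_bot_eq HX).
    rewrite <- (meet_orth HX x). apply (meet_glb HX); [apply (meet_l HX) |].
    apply (le_trans HX _ (meet a (orth x))); apply (meet_r HX).
  - intros [x Hx]; apply down_eq; simpl.
    rewrite (meet_comm HX). symmetry. apply (orthomod HX _ _ Hx).
  - intros [x Hx] [y Hy] H; apply down_eq; simpl in *.
    assert (E : meet (meet a (orth x)) y = meet (orth x) y).
    { apply (le_antisym HX); apply (meet_glb HX).
      - apply (le_trans HX _ (meet a (orth x))); [apply (meet_l HX) | apply (meet_r HX)].
      - apply (meet_r HX).
      - apply (meet_glb HX); [| apply (meet_l HX)].
        apply (le_trans HX _ y); [apply (meet_r HX) | exact Hy].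
      - apply (meet_r HX). }
    rewrite E. apply (orthomod HX _ _ H).
Qed.

Lemma downmor_mor (a : X) : is_mor (downmor HX a).
Proof.
  split; [|split]; simpl.
  - intros x x' H; apply (orth_anti HX), H.
  - intros y y' H. apply (meet_glb HX); [apply (meet_l HX) |].
    apply (le_trans HX _ (orth y')); [apply (meet_r HX) | apply (orth_anti HX), H].
  - intros [u Hu] y; simpl; split; intro H.
    + apply (meet_glb HX); [exact Hu | apply (orth_swap HX), H].
    + apply (orth_swap HX). apply (le_trans HX _ (meet a (orth y))); [exact H | apply (meet_r HX)].
Qed.

Lemma downmor_dagger_mono (a : X) : is_dagger_mono (downmor HX a).
Proof. split; intro x; apply down_eq; simpl; rewrite (orth_invol HX); reflexivity. Qed.

Lemma comp_zero_down (Z : OMLstr) (HZ : is_OML Z) (g : Hom X Z) (Hg : is_mor g) (v : X) :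
  fs g v = top -> heq (comp g (downmor HX v)) (zero_mor (down HX v) Z).
Proof.
  intro E. split.
  - intros [t Ht]; simpl. rewrite (orth_invol HX). apply (top_le_eq HZ).
    rewrite <- E. apply (fs_anti Hg), Ht.
  - intro z; apply down_eq; simpl. rewrite (orth_invol HX). apply (meet_eq_l HX).
    apply (gal Hg). rewrite E. apply (le_top HZ).
Qed.

(* The downset a : ↓a -> X is a kernel of the dagger of a^⊥ : ↓a^⊥ -> X; the
   mediating map of h : W -> X is w ↦ a ∧ h_*(w). *)
Lemma down_kernel (a : X) : is_kernel (downmor HX a) (dag (downmor HX (orth a))).
Proof.
  split.
  - split.
    + intros [t Ht]; apply down_eq; simpl. rewrite !(orth_invol HX).
      apply (meet_eq_l HX). apply (orth_anti HX), Ht.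
    + intros [z Hz]; apply down_eq; simpl. rewrite !(orth_invol HX).
      apply (meet_eq_l HX). apply (orth_swap HX), Hz.
  - intros W h HW Hh [Hzero _].
    assert (Ha : forall w, le (orth a) (fs h w)).
    { intro w. specialize (Hzero w). apply (f_equal (@proj1_sig _ _)) in Hzero.
      simpl in Hzero. rewrite (orth_invol HX) in Hzero. rewrite <- Hzero. apply (meet_r HX). }
    set (u := mkHom (fun w : W => (exist (fun x => le x a) (meet a (fs h w)) (meet_l HX _ _)
                                   : down HX a))
                    (fun v : down HX a => fu h (proj1_sig v))).
    assert (Hu : is_mor u).
    { split; [|split]; simpl.
      - intros w w' H. apply (meet_glb HX); [apply (meet_l HX) |].
        apply (le_trans HX _ (fs h w')); [apply (meet_r HX) | apply (fs_anti Hh), H].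
      - intros y y' H. apply (fu_anti Hh), H.
      - intros w [v Hv]; simpl. rewrite <- (gal Hh). split; intro H.
        + apply (le_trans HX _ _ _ H). apply (meet_r HX).
        + apply (meet_glb HX); assumption. }
    assert (Hfac : forall w, fs (comp (downmor HX a) u) w = fs h w).
    { intro w; simpl.
      assert (Hy : le (orth (fs h w)) a) by apply (orth_swap' HX), Ha.
      pose proof (down_invol HX _ _ Hy) as E. rewrite (orth_invol HX) in E.
      rewrite E. apply (orth_invol HX). }
    pose proof (comp_mor _ _ _ (down_OML a) _ _ Hu (downmor_mor a)) as Hcomp.
    exists u; split; [exact Hu | split].
    + apply (heq_of_fs _ _ HW); assumption.
    + intros u' Hu' [Hc _]. apply (heq_of_fs _ _ HW); [exact Hu' | exact Hu |].
      intro w. specialize (Hc w). rewrite <- Hfac in Hc. simpl in Hc.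
      destruct (fs u' w) as [t Ht]; apply down_eq; simpl in *.
      apply (f_equal orth) in Hc. rewrite !(orth_invol HX) in Hc.
      rewrite <- (down_invol HX _ _ Ht), Hc. apply (down_invol HX), (meet_l HX).
Qed.

Lemma down_dkernel (a : X) : is_dkernel (downmor HX a).
Proof.
  split; [apply down_OML | split; [apply downmor_mor | split; [apply downmor_dagger_mono |]]].
  exists (down HX (orth a)), (dag (downmor HX (orth a))).
  split; [apply down_OML | split; [apply dag_mor, downmor_mor | apply down_kernel]].
Qed.
End Downset.
Definition kimg {K X : OMLstr} (k : Hom K X) : X := orth (fs k top).

Lemma kimg_down {X : OMLstr} (HX : is_OML X) (a : X) : kimg (downmor HX a) = a.
Proof. apply (orth_invol HX). Qed.

Section Kernel.
Context {K X Z : OMLstr} (HK : is_OML K) (HX : is_OML X) (HZ : is_OML Z)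
  {k : Hom K X} {g : Hom X Z} (Hk : is_mor k) (Hg : is_mor g) (Hker : is_kernel k g).

Lemma kernel_factor_down (v : X) :
  fs g v = top -> exists u : Hom (down HX v) K, is_mor u /\ heq (comp k u) (downmor HX v).
Proof.
  intro E. destruct Hker as [_ Huniv].
  destruct (Huniv (down HX v) (downmor HX v) (down_OML HX v) (downmor_mor HX v)
              (comp_zero_down HX _ HZ g Hg v E)) as (u & Hu & Hc & _).
  exists u; split; assumption.
Qed.

Lemma kernel_annihilates_kimg : fs g (kimg k) = top.
Proof. destruct Hker as [[H _] _]. exact (H top). Qed.

Lemma kernel_kimg_max (v : X) : fs g v = top -> le v (kimg k).
Proof.
  intro E. destruct (kernel_factor_down v E) as (u & Hu & [Hc _]).
  apply (orth_swap HX). specialize (Hc top). simpl in Hc. rewrite <- Hc.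
  apply (fs_anti Hk). apply (le_top HK).
Qed.

Lemma kernel_kimg_char (c : X) : (forall v, fs g v = top <-> le v c) -> kimg k = c.
Proof.
  intro H. apply (le_antisym HX).
  - apply H. apply kernel_annihilates_kimg.
  - apply kernel_kimg_max. apply H. apply (le_refl HX).
Qed.

(* The image of k_* contains the whole up-set of k_*(1): factor ↓(kimg k) through k. *)
Lemma kernel_image (y : X) : le (fs k top) y -> exists x, fs k x = y.
Proof.
  intro Hy. destruct (kernel_factor_down _ kernel_annihilates_kimg) as (u & Hu & [Hc _]).
  assert (P : le (orth y) (kimg k)) by apply (orth_anti HX), Hy.
  specialize (Hc (exist _ (orth y) P)). simpl in Hc. rewrite (orth_invol HX) in Hc.
  eexists; exact Hc.
Qed.
End Kernel.

Lemma kimg_kernel_dag {K X W : OMLstr} (HK : is_OML K) (HX : is_OML X) (HW : is_OML W)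
  (k : Hom K X) (g : Hom W X) :
  is_mor k -> is_mor g -> is_kernel k (dag g) -> kimg k = fs g top.
Proof.
  intros Hk Hg Hker. apply (kernel_kimg_char HK HX HW Hk (dag_mor _ _ _ Hg) Hker).
  intro v; simpl. rewrite (gal Hg). split; intro H.
  - rewrite H. apply (le_top HW).
  - apply (top_le_eq HW), H.
Qed.

Lemma kimg_iso_invariant {K K' X : OMLstr} (HK : is_OML K) (HK' : is_OML K') (HX : is_OML X)
  (k : Hom K X) (k' : Hom K' X) :
  is_mor k -> is_mor k' -> ksub_iso k k' -> kimg k = kimg k'.
Proof.
  intros Hk Hk' (p & q & _ & _ & _ & [Hpq _] & [Hkp _]). unfold kimg. f_equal.
  apply (le_antisym HX).
  - assert (E : fs k (orth (fs q top)) = fs k' top).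
    { rewrite <- Hkp. simpl in Hpq |- *. rewrite Hpq, (orth_invol HK'). reflexivity. }
    rewrite <- E. apply (fs_anti Hk). apply (le_top HK).
  - rewrite <- Hkp. apply (fs_anti Hk'). apply (le_top HK').
Qed.

Lemma dkernel_image {K X : OMLstr} (HX : is_OML X) (k : Hom K X) (y : X) :
  is_dkernel k -> (exists x, fs k x = y) <-> le (fs k top) y.
Proof.
  intros (HK & Hk & _ & Z & g & HZ & Hg & Hker). split.
  - intros [x <-]. apply (fs_anti Hk), (le_top HK).
  - apply (kernel_image HX HZ Hg Hker).
Qed.

Section DaggerMono.
Context {K X : OMLstr} (HK : is_OML K) {k : Hom K X} (Hdk : is_dagger_mono k).

Lemma dagger_mono_retract (x : K) : fu k (orth (fs k x)) = orth x.
Proof. destruct Hdk as [H _]. exact (H x). Qed.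

Lemma dagger_mono_section (x : K) : fs k (orth (fu k (orth (fs k x)))) = fs k x.
Proof. rewrite dagger_mono_retract, (orth_invol HK). reflexivity. Qed.
End DaggerMono.

(* Two dagger monos with the same image are isomorphic, via k'^† ∘ k and k^† ∘ k'. *)
Lemma ksub_iso_of_same_image {K K' X : OMLstr} (HK : is_OML K) (HK' : is_OML K')
  (HX : is_OML X) (k : Hom K X) (k' : Hom K' X) :
  is_mor k -> is_mor k' -> is_dagger_mono k -> is_dagger_mono k' ->
  (forall x, exists w, fs k' w = fs k x) -> (forall x, exists w, fs k w = fs k' x) ->
  ksub_iso k k'.
Proof.
  intros Hk Hk' Hdk Hdk' I1 I2.
  assert (Hp : is_mor (comp (dag k') k)) by (apply (comp_mor _ _ _ HX); auto using dag_mor).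
  assert (Hq : is_mor (comp (dag k) k')) by (apply (comp_mor _ _ _ HX); auto using dag_mor).
  exists (comp (dag k') k), (comp (dag k) k').
  split; [exact Hp | split; [exact Hq | split; [| split]]].
  - apply (heq_of_fs _ _ HK); [apply (comp_mor _ _ _ HK'); auto | apply idm_mor, HK |].
    intro x; simpl. destruct (I1 x) as [w Hw].
    rewrite <- Hw, (dagger_mono_section HK' Hdk'), Hw. apply (dagger_mono_retract Hdk).
  - apply (heq_of_fs _ _ HK'); [apply (comp_mor _ _ _ HK); auto | apply idm_mor, HK' |].
    intro x; simpl. destruct (I2 x) as [w Hw].
    rewrite <- Hw, (dagger_mono_section HK Hdk), Hw. apply (dagger_mono_retract Hdk').
  - apply (heq_of_fs _ _ HK); [apply (comp_mor _ _ _ HK'); auto | exact Hk |].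
    intro x; simpl. destruct (I1 x) as [w Hw]. rewrite <- Hw. apply (dagger_mono_section HK' Hdk').
Qed.

Lemma dkernel_ksub_iso {K K' X : OMLstr} (HX : is_OML X) (k : Hom K X) (k' : Hom K' X) :
  is_dkernel k -> is_dkernel k' -> kimg k = kimg k' -> ksub_iso k k'.
Proof.
  intros Hdk Hdk' E.
  assert (Etop : fs k top = fs k' top).
  { apply (f_equal orth) in E. unfold kimg in E. rewrite !(orth_invol HX) in E. exact E. }
  pose proof Hdk as (HK & Hk & Hmono & _). pose proof Hdk' as (HK' & Hk' & Hmono' & _).
  apply ksub_iso_of_same_image; auto.
  - intro x. apply (dkernel_image HX k' (fs k x) Hdk'). rewrite <- Etop.
    apply (dkernel_image HX k (fs k x) Hdk). eauto.
  - intro x. apply (dkernel_image HX k (fs k' x) Hdk). rewrite Etop.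
    apply (dkernel_image HX k' (fs k' x) Hdk'). eauto.
Qed.

Lemma two_OML : is_OML two.
Proof.
  constructor; simpl; intros;
    repeat match goal with b : bool |- _ => destruct b end; simpl in *; auto;
    match goal with H : true = true -> false = true |- _ => discriminate (H eq_refl) end.
Qed.

Lemma abar_mor {X : OMLstr} (HX : is_OML X) (c : X) : is_mor (abar c).
Proof.
  split; [|split]; simpl.
  - intros [|] [|] H; simpl; try apply (le_refl HX); try apply (le_top HX).
    discriminate (H eq_refl).
  - intros y y' H.
    destruct (excluded_middle_informative (le y' (orth c))) as [H1|H1];
    destruct (excluded_middle_informative (le y (orth c))) as [H2|H2]; auto.
    intros _. exfalso. apply H2. apply (le_trans HX _ _ _ H H1).
  - intros [|] y; destruct (excluded_middle_informative (le y (orth c))) as [H|H];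
      split; intro H'; auto; try discriminate (H' eq_refl); try contradiction;
      try apply (le_top HX); intro; discriminate.
Qed.

Lemma abar_inj {X : OMLstr} (HX : is_OML X) (a b : X) : heq (abar a) (abar b) -> a = b.
Proof.
  intros [E _]. specialize (E true). simpl in E.
  rewrite <- (orth_invol HX a), E. apply (orth_invol HX).
Qed.

Lemma two_mor_abar {X : OMLstr} (HX : is_OML X) (g : Hom two X) :
  is_mor g -> heq (abar (orth (fs g true))) g.
Proof.
  intro Hg. apply (heq_of_fs _ _ two_OML); [apply abar_mor, HX | exact Hg |].
  intros [|]; simpl.
  - apply (orth_invol HX).
  - symmetry. apply (fs_bot Hg two_OML HX).
Qed.

Lemma abar_comp {X Y : OMLstr} (HX : is_OML X) (HY : is_OML Y) (f : Hom X Y) (c : X) :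
  is_mor f -> heq (abar (orth (fs f c))) (comp f (abar c)).
Proof.
  intro Hf. apply (heq_of_fs _ _ two_OML); [apply abar_mor, HY | |].
  - apply (comp_mor _ _ _ HX); [apply abar_mor, HX | exact Hf].
  - intros [|]; simpl.
    + rewrite (orth_invol HY), (orth_invol HX). reflexivity.
    + rewrite (orth_top HX). symmetry. apply (fs_bot Hf HX HY).
Qed.

Theorem mainTheorem9 :
  exists ch : forall (X K : OMLstr), Hom K X -> Hom two X,
  forall (X : OMLstr) (HX : is_OML X),
    (forall (K : OMLstr) (k : Hom K X), is_dkernel k -> is_mor (ch X K k)) /\
    (forall (K K' : OMLstr) (k : Hom K X) (k' : Hom K' X),
        is_dkernel k -> is_dkernel k' -> ksub_iso k k' ->
        heq (ch X K k) (ch X K' k')) /\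
    (forall (K K' : OMLstr) (k : Hom K X) (k' : Hom K' X),
        is_dkernel k -> is_dkernel k' -> heq (ch X K k) (ch X K' k') ->
        ksub_iso k k') /\
    (forall g : Hom two X, is_mor g ->
        exists (K : OMLstr) (k : Hom K X), is_dkernel k /\ heq (ch X K k) g) /\
    (forall a : X, heq (ch X (down HX a) (downmor HX a)) (abar a)) /\
    (forall (Y : OMLstr) (HY : is_OML Y) (f : Hom X Y), is_mor f ->
      forall (M : OMLstr) (m : Hom M X), is_dkernel m ->
      forall (J : OMLstr) (j : Hom J Y), is_dkernel j -> is_kernel j (dag (comp f m)) ->
      forall (K : OMLstr) (k : Hom K Y), is_dkernel k -> is_kernel k (dag j) ->
        heq (ch Y K k) (comp f (ch X M m))).
Proof.
  exists (fun X K k => abar (kimg k)).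
  intros X HX. split; [|split; [|split; [|split; [|split]]]].
  - intros K k _. apply abar_mor, HX.
  - intros K K' k k' (HK & Hk & _) (HK' & Hk' & _) Hiso.
    rewrite (kimg_iso_invariant HK HK' HX k k' Hk Hk' Hiso). split; reflexivity.
  - intros K K' k k' Hdk Hdk' E. apply (dkernel_ksub_iso HX k k' Hdk Hdk'), (abar_inj HX), E.
  - intros g Hg. exists (down HX (orth (fs g true))), (downmor HX (orth (fs g true))).
    split; [apply down_dkernel | rewrite kimg_down; apply two_mor_abar; assumption].
  - intro a. rewrite kimg_down. split; reflexivity.
  - intros Y HY f Hf M m (HM & Hm & _) J j (HJ & Hj & _) Hjker K k (HK & Hk & _) Hkker.
    (* j = ker((f ∘ m)^†) is classified by f_*(kimg m), and ∃_f m = k = ker(j^†) by its complement *)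
    assert (Ej : kimg j = fs f (kimg m))
      by exact (kimg_kernel_dag HJ HY HM j _ Hj (comp_mor _ _ _ HX _ _ Hm Hf) Hjker).
    assert (Ek : kimg k = orth (kimg j)).
    { rewrite (kimg_kernel_dag HK HY HJ k j Hk Hj Hkker). symmetry. apply (orth_invol HY). }
    rewrite Ek, Ej. apply (abar_comp HX HY), Hf.
Qed.
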